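(* For all integers $n,k\ge 0$, the unsigned Stirling numbers of the first kind satisfy $\left[{n \atop k}\right] \le \frac{2^n n!}{k!}$.
   Context: $\left[{n \atop k}\right]$ denotes the unsigned Stirling number of the first kind (number of permutations of $n$ elements with exactly $k$ cycles), satisfying $\left[{n+1 \atop k}\right] = n\left[{n \atop k}\right] + \left[{n \atop k-1}\right]$. *)

From mathcomp Require Import all_boot all_order all_algebra.
Set Implicit Arguments.
Unset Strict Implicit.
Unset Printing Implicit Defensive.

Fixpoint stirling1 (n k : nat) : nat :=
  match n, k with
  | 0, 0 => 1
  | 0, _.+1 => 0
  | _.+1, 0 => 0
  | n'.+1, k'.+1 => n' * stirling1 n' k + stirling1 n' k'
  end.

(* Induction on n: multiplying the recurrence by (k+1)! gives
   [n+1, k+1] (k+1)! = n [n, k+1] (k+1)! + (k+1) [n, k] k! <= (n + k + 1) 2^n n!,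
   and n + k + 1 <= 2 (n + 1) as soon as k <= n; for k > n both sides vanish. *)
From mathcomp Require Import all_boot all_order all_algebra zify ring.
Import GRing.Theory Num.Theory.
Local Open Scope ring_scope.

Lemma stirling1_eq0 (n k : nat) : (n < k)%N -> stirling1 n k = 0%N.
Proof.
elim: n k => [|n IHn] [|k] //= ltnk.
by rewrite !IHn ?muln0 // ltnW.
Qed.

Lemma stirling1_fact_le (n k : nat) : (stirling1 n k * k`! <= 2 ^ n * n`!)%N.
Proof.
elim: n k => [|n IHn] [|k] //.
have [ltnk|lekn] := ltnP n k; first by rewrite stirling1_eq0.
have -> : (2 ^ n.+1 * n.+1`! = 2 * n.+1 * (2 ^ n * n`!))%N.
  by rewrite expnS factS; ring.
apply: (@leq_trans ((n + k.+1) * (2 ^ n * n`!))); last by apply: leq_mul => //; lia.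
rewrite /= !mulnDl leq_add //.
- by rewrite -mulnA leq_mul2l IHn orbT.
- by rewrite factS mulnCA leq_mul2l IHn orbT.
Qed.

Theorem lemma1 (n k : nat) :
  (stirling1 n k)%:R <= ((2 ^ n * n`!)%N)%:R / (k`!)%:R :> rat.
Proof.
by rewrite ler_pdivlMr ?ltr0n ?fact_gt0 // -natrM ler_nat stirling1_fact_le.
Qed.
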